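(* Let $(X,e\colon X\to M\otimes X)$ be a coalgebra for $F$ on $\mathbf{Met_3}^{C}$ and let $f\colon X\to S$ be given by $f(x)=\lim_{n\to\infty}\theta_n(x)$, where for $x\in X$: $\chi_0=x$, $\chi_n=(M^{n-1}\otimes e)(\chi_{n-1})$, $m_0,m_1,\ldots\in M$ are chosen with $\chi_n=m_0\otimes\cdots\otimes m_{n-1}\otimes x_n$ for all $n$, and $\theta_n(x)=m_0\otimes\cdots\otimes m_{n-1}\otimes z\in G$ for a fixed $z\in\{T,L,R\}$ (this limit exists and is independent of the choices). Then $f$ is continuous, and is therefore a morphism in $\mathbf{Met_3}^{C}$.
   Context: A tripointed metric space is a set with three distinct points $T,L,R$ and a metric bounded by $1$ in which $T,L,R$ have pairwise distance $1$. $\mathbf{Met_3}^{C}$: tripointed metric spaces with continuous maps preserving $T,L,R$. Let $M=\{a,b,c\}$. $M\times X$ has metric $\tfrac12d(x,y)$ within a copy and $1$ between copies; $M\otimes X$ is the quotient metric space by the equivalence relation generated by $(b,T)\sim(a,L)$, $(a,R)\sim(c,T)$, $(c,L)\sim(b,R)$, elements $m\otimes x$, distinguished points $a\otimes T,b\otimes L,c\otimes R$; $F=M\otimes-$, $(M\otimes f)(m\otimes x)=m\otimes f(x)$; $M^n\otimes-$ is the $n$-fold iterate. A coalgebra is $(X,e\colon X\to FX)$. With $I=\{T,L,R\}$ discrete and $!\colon I\to FI$ ($T\mapsto a\otimes T$, $L\mapsto b\otimes L$, $R\mapsto c\otimes R$), $G$ is the metric union of the chain of isometric embeddings $I\to FI\to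 F^2I\to\cdots$ (elements: expressions $m_0\otimes\cdots\otimes m_{n-1}\otimes z$ modulo induced identifications). $S$ is the Cauchy completion of $G$, with distinguished points $T,L,R$. *)

From Stdlib Require Import Reals Relations ClassicalEpsilon.
From Coquelicot Require Import Rbar Lub Lim_seq.
Open Scope R_scope.

Record Met3 := mkMet3 {
  car :> Type;
  mdist : car -> car -> R;
  tT : car; tL : car; tR : car }.
Arguments mdist {m} _ _.
Arguments tT {m}. Arguments tL {m}. Arguments tR {m}.

Definition is_met3 (X : Met3) : Prop :=
  (forall x y : X, 0 <= mdist x y <= 1) /\
  (forall x y : X, mdist x y = 0 <-> x = y) /\
  (forall x y : X, mdist x y = mdist y x) /\
  (forall x y z : X, mdist x z <= mdist x y + mdist y z) /\
  mdist (@tT X) (@tL X) = 1 /\ mdist (@tL X) (@tR X) = 1 /\ mdist (@tT X) (@tR X) = 1.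

Definition continuous {X Y : Met3} (f : X -> Y) : Prop :=
  forall x eps, 0 < eps -> exists delta, 0 < delta /\
    forall y, mdist x y < delta -> mdist (f x) (f y) < eps.

Definition preserves {X Y : Met3} (f : X -> Y) : Prop :=
  f tT = tT /\ f tL = tL /\ f tR = tR.

(* Metric quotient (metric identification) of a pseudometric on A:     *)
(* the points are the classes {b | p a b = 0}.  The distance is 0 on   *)
Definition Quot (A : Type) (p : A -> A -> R) : Type :=
  {P : A -> Prop | exists a, forall b, P b <-> p a b = 0}.

Definition cls {A : Type} (p : A -> A -> R) (a : A) : Quot A p :=
  exist _ (fun b => p a b = 0) (ex_intro _ a (fun b => iff_refl _)).

Definition rep {A : Type} {p : A -> A -> R} (P : Quot A p) : A :=
  proj1_sig (constructive_indefinite_description _ (proj2_sig P)).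

Definition qdist {A : Type} {p : A -> A -> R} (P Q : Quot A p) : R :=
  if excluded_middle_informative (P = Q) then 0 else p (rep P) (rep Q).

Lemma qdist_refl {A : Type} {p : A -> A -> R} (P : Quot A p) : qdist P P = 0.
Proof.
  unfold qdist; destruct (excluded_middle_informative (P = P)) as [_|h];
    [reflexivity | exfalso; apply h; reflexivity].
Qed.

Inductive M3 := ma | mb | mc.

Definition M3_eqb (m n : M3) : bool :=
  match m, n with ma, ma | mb, mb | mc, mc => true | _, _ => false end.

Section Tensor.
Variable Y : Met3.

Definition dprod (p q : M3 * Y) : R :=
  if M3_eqb (fst p) (fst q) then / 2 * mdist (snd p) (snd q) else 1.

Definition glue0 (p q : M3 * Y) : Prop :=
  (p = (mb, tT) /\ q = (ma, tL)) \/
  (p = (ma, tR) /\ q = (mc, tT)) \/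
  (p = (mc, tL) /\ q = (mb, tR)).

Definition glue : relation (M3 * Y) := clos_refl_sym_trans _ glue0.

(* chains p = p_0, q_0 ~ p_1, q_1 ~ ... ~ p_k, q_k = r with cost sum d(p_i,q_i) *)
Inductive chain : M3 * Y -> M3 * Y -> R -> Prop :=
| chain_one p r : chain p r (dprod p r)
| chain_cons p q p' r c : glue q p' -> chain p' r c -> chain p r (dprod p q + c).

Definition pglue (p r : M3 * Y) : R := real (Glb_Rbar (fun c => chain p r c)).
End Tensor.

Definition F (Y : Met3) : Met3 :=
  mkMet3 (Quot (M3 * Y) (pglue Y)) qdist
    (cls (pglue Y) (ma, tT)) (cls (pglue Y) (mb, tL)) (cls (pglue Y) (mc, tR)).

Definition tensor {Y : Met3} (m : M3) (y : Y) : F Y := cls (pglue Y) (m, y).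

Definition Fmap {Y Z : Met3} (g : Y -> Z) (u : F Y) : F Z :=
  tensor (fst (rep u)) (g (snd (rep u))).

Fixpoint Fiter (n : nat) (Y : Met3) : Met3 :=
  match n with O => Y | S k => Fiter k (F Y) end.

Fixpoint Fmap_iter (n : nat) {Y Z : Met3} (g : Y -> Z) : Fiter n Y -> Fiter n Z :=
  match n with O => g | S k => Fmap_iter k (Fmap g) end.

(* m_0 (x) ... (x) m_(n-1) (x) y *)
Fixpoint tens (m : nat -> M3) (n : nat) {Y : Met3} (y : Y) : Fiter n Y :=
  match n with O => y | S k => tens m k (tensor (m k) y) end.

Fixpoint chi {X : Met3} (e : X -> F X) (x : X) (n : nat) : Fiter n X :=
  match n with O => x | S k => Fmap_iter k e (chi e x k) end.

Inductive P3 := T | L | Rp.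

Definition P3_eqb (x y : P3) : bool :=
  match x, y with T, T | L, L | Rp, Rp => true | _, _ => false end.

Definition I : Met3 :=
  mkMet3 P3 (fun x y => if P3_eqb x y then 0 else 1) T L Rp.

Definition bang (x : I) : F I :=
  match x with T => @tensor I ma T | L => @tensor I mb L | Rp => @tensor I mc Rp end.

Fixpoint lift (k n : nat) (u : Fiter n I) : Fiter (k + n)%nat I :=
  match k with O => u | S j => Fmap_iter (j + n)%nat bang (lift j n u) end.

Definition Gpre : Type := {n : nat & car (Fiter n I)}.

(* distance in the metric union: compare in a common F^N I *)
Definition pG (u v : Gpre) : R :=
  match u, v with
  | existT n x, existT m y =>
      mdist (lift m n x)
        (eq_rect (n + m)%nat (fun N => car (Fiter N I)) (lift n m y) (m + n)%nat
           (PeanoNat.Nat.add_comm n m))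
  end.

Definition Gel (n : nat) (x : Fiter n I) : Gpre :=
  existT (fun k => car (Fiter k I)) n x.

Definition G : Met3 :=
  mkMet3 (Quot Gpre pG) qdist
    (cls pG (Gel 0 T)) (cls pG (Gel 0 L)) (cls pG (Gel 0 Rp)).

Definition cauchyG (s : nat -> G) : Prop :=
  forall eps, 0 < eps -> exists N, forall n k, (N <= n)%nat -> (N <= k)%nat ->
    mdist (s n) (s k) < eps.

Definition CauchyG : Type := {s : nat -> G | cauchyG s}.

Definition dCS (s t : CauchyG) : R :=
  real (Lim_seq (fun n => mdist (proj1_sig s n) (proj1_sig t n))).

Lemma const_cauchyG (x : G) : cauchyG (fun _ => x).
Proof.
  intros eps Heps; exists O; intros n k _ _; simpl.
  rewrite qdist_refl; exact Heps.
Qed.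

Definition jS (x : G) : Quot CauchyG dCS :=
  cls dCS (exist _ (fun _ => x) (const_cauchyG x)).

Definition S : Met3 :=
  mkMet3 (Quot CauchyG dCS) qdist (jS tT) (jS tL) (jS tR).

Definition theta (m : nat -> M3) (z : P3) (n : nat) : G :=
  cls pG (Gel n (tens m n (z : I))).

(* As [T], [L], [R] are pairwise at distance 1, the three-point space [I] embeds
   isometrically into [X], and [M (x) -] preserves isometries.  So [theta_n(x)] can be compared
   with [chi_n(x) = m_0 (x) ... (x) m_(n-1) (x) x_n] inside [M^n (x) X] at a cost of [2^-n],
   since [m_0 (x) ... (x) m_(n-1) (x) -] is [2^-n]-Lipschitz.  As [f x] is within [2^-n] of
   [theta_n(x)], this gives [d(f x, f y) <= 4 * 2^-n + d(chi_n x, chi_n y)], and [chi_n] is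
   continuous because [M (x) -] preserves continuity: the glue points are [1/2] apart, so a
   chain of small cost in [M x X] makes at most one jump.  Finally [e T = a (x) T] makes
   [theta_n(T) = a (x) ... (x) a (x) z], which is [2^-n]-close to [T] in [G]; so [f T = T],
   and likewise for [L] and [R]. *)

From Stdlib Require Import Reals Lra Lia Relations List ClassicalEpsilon Classical.
From Stdlib Require Import FunctionalExtensionality PropExtensionality ProofIrrelevance.
From Coquelicot Require Import Rcomplements Rbar Lub Lim_seq.
Open Scope R_scope.

(** * Metric quotients *)

Definition is_pseudometric {A : Type} (p : A -> A -> R) : Prop :=
  (forall a, p a a = 0) /\ (forall a b, p a b = p b a) /\
  (forall a b c, p a c <= p a b + p b c).

Section MetricQuotient.
Context {A : Type} (p : A -> A -> R) (Hp : is_pseudometric p).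

Lemma pseudometric_ge0 a b : 0 <= p a b.
Proof.
  destruct Hp as (H0 & Hs & Ht).
  pose proof (Ht a b a) as H. rewrite H0, (Hs b a) in H. lra.
Qed.

Lemma eq_cls a b : p a b = 0 -> cls p a = cls p b.
Proof.
  destruct Hp as (_ & Hs & Ht). intros Hab.
  apply eq_sig_hprop; [intros; apply proof_irrelevance|]; simpl.
  apply functional_extensionality; intro c; apply propositional_extensionality.
  pose proof (pseudometric_ge0 a c). pose proof (pseudometric_ge0 b c).
  pose proof (Ht a b c). pose proof (Ht b a c). rewrite (Hs b a) in *.
  split; intro; lra.
Qed.

Lemma cls_eq_dist0 a b : cls p a = cls p b -> p a b = 0.
Proof.
  destruct Hp as (H0 & Hs & _). intro E.
  apply (f_equal (fun P => proj1_sig P a)) in E. simpl in E.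
  rewrite Hs, <- E. apply H0.
Qed.

Lemma rep_spec (P : Quot A p) b : proj1_sig P b <-> p (rep P) b = 0.
Proof.
  unfold rep. destruct (constructive_indefinite_description _ _) as [x Hx]. apply Hx.
Qed.

Lemma cls_rep (P : Quot A p) : cls p (rep P) = P.
Proof.
  apply eq_sig_hprop; [intros; apply proof_irrelevance|]; simpl.
  apply functional_extensionality; intro c; apply propositional_extensionality.
  rewrite rep_spec. tauto.
Qed.

Lemma rep_cls a : p (rep (cls p a)) a = 0.
Proof. apply (rep_spec (cls p a) a). simpl. apply Hp. Qed.

Lemma qdist_cls a b : qdist (cls p a) (cls p b) = p a b.
Proof.
  destruct Hp as (_ & Hs & Ht).
  unfold qdist. destruct (excluded_middle_informative _) as [E|_].
  - symmetry. apply cls_eq_dist0, E.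
  - pose proof (rep_cls a). pose proof (rep_cls b).
    set (ra := rep (cls p a)) in *. set (rb := rep (cls p b)) in *.
    pose proof (Ht ra a rb). pose proof (Ht a ra b). pose proof (Ht a b rb). pose proof (Ht ra rb b).
    rewrite (Hs a ra), (Hs b rb) in *. lra.
Qed.

Lemma qdist_rep (P Q : Quot A p) : qdist P Q = p (rep P) (rep Q).
Proof. rewrite <- (cls_rep P) at 1. rewrite <- (cls_rep Q) at 1. apply qdist_cls. Qed.

Lemma qdist_pseudometric : is_pseudometric (@qdist A p).
Proof.
  destruct Hp as (H0 & Hs & Ht).
  split; [|split]; intros; rewrite ?qdist_rep; auto.
Qed.

Lemma qdist_eq0 (P Q : Quot A p) : qdist P Q = 0 -> P = Q.
Proof.
  rewrite qdist_rep. intro H. rewrite <- (cls_rep P), <- (cls_rep Q). apply eq_cls, H.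
Qed.

End MetricQuotient.

Definition pt (Y : Met3) (t : P3) : Y :=
  match t with T => tT | L => tL | Rp => tR end.

(* The letter [m] such that [m (x) t] is the point [t] of [M (x) Y]. *)
Definition letter (t : P3) : M3 := match t with T => ma | L => mb | Rp => mc end.

Lemma pt_F (Y : Met3) t : pt (F Y) t = tensor (letter t) (pt Y t).
Proof. destruct t; reflexivity. Qed.

Lemma preserves_pt {Y Z : Met3} (g : Y -> Z) : preserves g -> forall t, g (pt Y t) = pt Z t.
Proof. intros (HT & HL & HR) []; assumption. Qed.

Lemma M3_eqbP m n : M3_eqb m n = true <-> m = n.
Proof. destruct m, n; simpl; split; congruence. Qed.

Lemma M3_eqb_refl m : M3_eqb m m = true.
Proof. destruct m; reflexivity. Qed.

Section Tripointed.
Variable Y : Met3.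
Hypothesis HY : is_met3 Y.

Lemma mdist_ge0 (x y : Y) : 0 <= mdist x y.
Proof. apply HY. Qed.
Lemma mdist_le1 (x y : Y) : mdist x y <= 1.
Proof. apply HY. Qed.
Lemma mdist_xx (x : Y) : mdist x x = 0.
Proof. apply HY. reflexivity. Qed.
Lemma mdist_eq0 (x y : Y) : mdist x y = 0 -> x = y.
Proof. apply HY. Qed.
Lemma mdist_sym (x y : Y) : mdist x y = mdist y x.
Proof. apply HY. Qed.
Lemma mdist_triangle (x y z : Y) : mdist x z <= mdist x y + mdist y z.
Proof. apply HY. Qed.

Lemma mdist_pt s t : mdist (pt Y s) (pt Y t) = if P3_eqb s t then 0 else 1.
Proof.
  destruct HY as (_ & _ & Hs & _ & HTL & HLR & HTR).
  destruct s, t; simpl; rewrite ?mdist_xx, ?(Hs tL), ?(Hs tR); auto.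
Qed.

Lemma pt_inj s t : pt Y s = pt Y t -> s = t.
Proof.
  intro E. pose proof (mdist_pt s t) as H. rewrite E, mdist_xx in H.
  destruct s, t; simpl in H; auto; lra.
Qed.

Lemma mdist_lipschitz (x y t : Y) : Rabs (mdist x t - mdist y t) <= mdist x y.
Proof.
  pose proof (mdist_triangle x y t). pose proof (mdist_triangle y x t).
  rewrite (mdist_sym y x) in *. apply Rabs_le. lra.
Qed.

End Tripointed.

Lemma I_met3 : is_met3 I.
Proof.
  split; [|split; [|split; [|split; [|split; [|split]]]]]; simpl; try reflexivity.
  - intros [] []; simpl; lra.
  - intros [] []; simpl; split; intro; congruence || lra.
  - intros [] []; reflexivity.
  - intros [] [] []; simpl; lra.
Qed.

(** * The metric of [M (x) Y] *)

Lemma list_small_le0 (l : list R) (a : R) : 0 < a ->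
  (forall c, 0 < c < a -> exists v, In v l /\ v <= c) -> exists v, In v l /\ v <= 0.
Proof.
  revert a; induction l as [|v l IH]; intros a Ha Hsmall.
  - destruct (Hsmall (a / 2)) as [v [[] _]]. lra.
  - destruct (Rle_dec v 0) as [Hv|Hv]; [exists v; simpl; auto|].
    destruct (IH (Rmin a v)) as [w [Hw Hw0]]; [apply Rmin_glb_lt; lra| |exists w; simpl; auto].
    intros c [Hc Hca]. pose proof (Rmin_l a v). pose proof (Rmin_r a v).
    destruct (Hsmall c) as [w [[<-|Hw] Hwc]]; [lra|lra|eauto].
Qed.

Section TensorMetric.
Variable Y : Met3.
Hypothesis HY : is_met3 Y.
Notation dp := (dprod Y).

Lemma dprod_same a (y y' : Y) : dp (a, y) (a, y') = / 2 * mdist y y'.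
Proof. unfold dprod. simpl. rewrite M3_eqb_refl. reflexivity. Qed.

Lemma dprod_ge0 p q : 0 <= dp p q.
Proof.
  unfold dprod. destruct (M3_eqb _ _); [pose proof (mdist_ge0 Y HY (snd p) (snd q))|]; lra.
Qed.

Lemma dprod_le1 p q : dp p q <= 1.
Proof.
  unfold dprod. destruct (M3_eqb _ _); [pose proof (mdist_le1 Y HY (snd p) (snd q))|]; lra.
Qed.

Lemma dprod_xx p : dp p p = 0.
Proof. destruct p. rewrite dprod_same, mdist_xx by assumption. lra. Qed.

Lemma dprod_sym p q : dp p q = dp q p.
Proof.
  unfold dprod. destruct (M3_eqb (fst p) (fst q)) eqn:E.
  - apply M3_eqbP in E. rewrite E, M3_eqb_refl, (mdist_sym Y HY). reflexivity.
  - destruct (M3_eqb (fst q) (fst p)) eqn:E'; auto.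
    apply M3_eqbP in E'. rewrite E', M3_eqb_refl in E. discriminate.
Qed.

Lemma dprod_lt1 p q c : dp p q <= c -> c < 1 -> fst p = fst q /\ / 2 * mdist (snd p) (snd q) <= c.
Proof.
  unfold dprod. destruct (M3_eqb _ _) eqn:E; [|lra].
  apply M3_eqbP in E. auto.
Qed.

Lemma dprod_eq0 p q : dp p q = 0 -> p = q.
Proof.
  intro H. destruct (dprod_lt1 p q 0) as [E H']; [lra|lra|].
  pose proof (mdist_ge0 Y HY (snd p) (snd q)).
  assert (Es : snd p = snd q) by (apply (mdist_eq0 Y HY); lra).
  destruct p, q; simpl in *; congruence.
Qed.

Lemma dprod_triangle p q r : dp p r <= dp p q + dp q r.
Proof.
  destruct p as [a y], q as [b y'], r as [c y''].
  pose proof (dprod_ge0 (a, y) (b, y')). pose proof (dprod_ge0 (b, y') (c, y'')).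
  destruct (Rlt_le_dec (dp (a, y) (b, y') + dp (b, y') (c, y'')) 1) as [Hlt|Hge].
  2: pose proof (dprod_le1 (a, y) (c, y'')); lra.
  destruct (dprod_lt1 (a, y) (b, y') _ (Rle_refl _)) as [Eab _]; [lra|].
  destruct (dprod_lt1 (b, y') (c, y'') _ (Rle_refl _)) as [Ebc _]; [lra|].
  simpl in Eab, Ebc. subst b c.
  rewrite !dprod_same. pose proof (mdist_triangle Y HY y y' y''). lra.
Qed.

Lemma chain_cost p r c c' : chain Y p r c -> c = c' -> chain Y p r c'.
Proof. intros H ->; exact H. Qed.

Lemma chain_ge0 p r c : chain Y p r c -> 0 <= c.
Proof. induction 1; [apply dprod_ge0|pose proof (dprod_ge0 p q); lra]. Qed.

Lemma chain_app p q c1 q' r c2 :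
  chain Y p q c1 -> glue Y q q' -> chain Y q' r c2 -> chain Y p r (c1 + c2).
Proof.
  intro H; revert q' r c2; induction H as [p q|p q p' q0 c Hg _ IH]; intros q' r c2 Hq Hc2.
  - eapply chain_cons; eauto.
  - eapply chain_cost; [eapply chain_cons; [exact Hg|exact (IH _ _ _ Hq Hc2)]|ring].
Qed.

Lemma chain_rev p r c : chain Y p r c -> chain Y r p c.
Proof.
  induction 1.
  - rewrite dprod_sym. apply chain_one.
  - eapply chain_cost; [eapply chain_app; [exact IHchain|apply rst_sym, H|apply chain_one]|].
    rewrite dprod_sym. ring.
Qed.

Lemma pglue_finite p r : Glb_Rbar (fun c => chain Y p r c) = Finite (pglue Y p r).
Proof.
  unfold pglue.
  destruct (Glb_Rbar_correct (fun c => chain Y p r c)) as [Hlb Hglb].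
  destruct (Glb_Rbar (fun c => chain Y p r c)); simpl; auto.
  - exfalso. exact (Hlb _ (chain_one Y p r)).
  - exfalso. refine (Hglb 0 _). intros c Hc. exact (chain_ge0 _ _ _ Hc).
Qed.

Lemma pglue_le p r c : chain Y p r c -> pglue Y p r <= c.
Proof.
  destruct (Glb_Rbar_correct (fun c => chain Y p r c)) as [Hlb _].
  rewrite pglue_finite in Hlb. apply Hlb.
Qed.

Lemma pglue_ge p r B : (forall c, chain Y p r c -> B <= c) -> B <= pglue Y p r.
Proof.
  destruct (Glb_Rbar_correct (fun c => chain Y p r c)) as [_ Hglb].
  rewrite pglue_finite in Hglb. apply (Hglb B).
Qed.

Lemma pglue_approx p r eps : 0 < eps -> exists c, chain Y p r c /\ c < pglue Y p r + eps.
Proof.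
  intro He. apply NNPP. intro N.
  enough (pglue Y p r + eps <= pglue Y p r) by lra.
  apply pglue_ge. intros c Hc. apply Rnot_lt_le. intro Hl. apply N. eauto.
Qed.

Lemma pglue_ge0 p r : 0 <= pglue Y p r.
Proof. apply pglue_ge, chain_ge0. Qed.

Lemma pglue_le_dprod p r : pglue Y p r <= dp p r.
Proof. apply pglue_le, chain_one. Qed.

Lemma pglue_via p q q' r : glue Y q q' -> pglue Y p r <= dp p q + dp q' r.
Proof. intro H. apply pglue_le. eapply chain_cons; [exact H|apply chain_one]. Qed.

Lemma pglue_pseudometric : is_pseudometric (pglue Y).
Proof.
  split; [|split].
  - intro a. pose proof (pglue_le_dprod a a). rewrite dprod_xx in H.
    pose proof (pglue_ge0 a a). lra.
  - enough (forall a b, pglue Y a b <= pglue Y b a) by (intros; apply Rle_antisym; auto).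
    intros a b. apply pglue_ge. intros c Hc. apply pglue_le, chain_rev, Hc.
  - intros a b c.
    enough (pglue Y a c - pglue Y b c <= pglue Y a b) by lra.
    apply pglue_ge. intros c1 H1.
    enough (pglue Y a c - c1 <= pglue Y b c) by lra.
    apply pglue_ge. intros c2 H2.
    pose proof (pglue_le _ _ _ (chain_app _ _ _ _ _ _ H1 (rst_refl _ _ b) H2)). lra.
Qed.

Lemma pglue_triangle p q r : pglue Y p r <= pglue Y p q + pglue Y q r.
Proof. apply pglue_pseudometric. Qed.

Lemma glue_pglue p q : glue Y p q -> pglue Y p q = 0.
Proof.
  intro H. pose proof (pglue_via p p q q H). rewrite !dprod_xx in H0.
  pose proof (pglue_ge0 p q). lra.
Qed.

Definition glue_edge (p q : M3 * Y) : Prop :=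
  exists s t, s <> t /\ p = (letter s, pt Y t) /\ q = (letter t, pt Y s).

Lemma letter_inj s t : letter s = letter t -> s = t.
Proof. destruct s, t; simpl; congruence. Qed.

Lemma glue_edge_sym p q : glue_edge p q -> glue_edge q p.
Proof. intros (s & t & Hst & -> & ->). exists t, s. auto. Qed.

Lemma glue0_edge p q : glue0 Y p q -> glue_edge p q.
Proof.
  intros [[-> ->]|[[-> ->]|[-> ->]]];
    [exists L, T|exists T, Rp|exists Rp, L]; repeat split; discriminate.
Qed.

Lemma glue_edge_glue p q : glue_edge p q -> glue Y p q.
Proof.
  intros (s & t & Hst & -> & ->).
  destruct s, t; try congruence;
    solve [apply rst_step; cbv; tauto | apply rst_sym, rst_step; cbv; tauto].
Qed.

Lemma glue_edge_partner p q q' : glue_edge p q -> glue_edge p q' -> q = q'.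
Proof.
  intros (s & t & _ & -> & ->) (s' & t' & _ & E & ->).
  injection E; intros Et Es.
  apply letter_inj in Es. apply (pt_inj Y HY) in Et. subst. reflexivity.
Qed.

Lemma glue_char p q : glue Y p q -> p = q \/ glue_edge p q.
Proof.
  induction 1 as [p q H| |p q _ [E|E]|p q r _ [E1|E1] _ [E2|E2]]; subst; auto.
  - right. apply glue0_edge, H.
  - right. apply glue_edge_sym, E.
  - left. apply (glue_edge_partner q); auto. apply glue_edge_sym, E1.
Qed.

Lemma glue_edge_far p p' q q' : glue_edge p p' -> glue_edge q q' -> dp p q < / 2 -> p = q.
Proof.
  intros (s & t & _ & -> & _) (s' & t' & _ & -> & _) H.
  destruct (dprod_lt1 (letter s, pt Y t) (letter s', pt Y t') _ (Rle_refl _)) as [Es Hd];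
    [lra|]; simpl in Es, Hd.
  apply letter_inj in Es. subst s'.
  rewrite (mdist_pt Y HY) in Hd. destruct (P3_eqb t t') eqn:E; [|lra].
  destruct t, t'; simpl in E; congruence.
Qed.

Definition one_glue_cost (p r : M3 * Y) (c : R) : Prop :=
  dp p r <= c \/ exists q q', glue_edge q q' /\ dp p q + dp q' r <= c.

(* Glue points are [1/2] apart, so a chain of cost [< 1/2] can make at most one jump. *)
Lemma chain_short p r c : chain Y p r c -> c < / 2 -> one_glue_cost p r c.
Proof.
  induction 1 as [p r|p q p' r c Hg Hc IH]; intro Hlt; [left; lra|].
  pose proof (dprod_ge0 p q). pose proof (chain_ge0 _ _ _ Hc).
  destruct (glue_char _ _ Hg) as [<-|Eqp].
  - destruct (IH ltac:(lra)) as [D|(g & g' & Eg & D)].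
    + left. pose proof (dprod_triangle p q r). lra.
    + right. exists g, g'. split; auto. pose proof (dprod_triangle p q g). lra.
  - destruct (IH ltac:(lra)) as [D|(g & g' & Eg & D)]; [right; exists q, p'; split; [exact Eqp|lra]|].
    pose proof (dprod_ge0 p' g). pose proof (dprod_ge0 g' r).
    assert (Eg' : p' = g) by (apply (glue_edge_far _ q _ g'); auto using glue_edge_sym; lra).
    subst g.
    assert (Eq : q = g') by (apply (glue_edge_partner p'); auto using glue_edge_sym).
    subst g'.
    left. pose proof (dprod_triangle p q r). lra.
Qed.

Lemma pglue_short p r c : pglue Y p r < c -> c < / 2 -> one_glue_cost p r c.
Proof.
  intros H1 H2. destruct (pglue_approx p r (c - pglue Y p r)) as (c' & Hc & Hc'); [lra|].
  destruct (chain_short _ _ _ Hc ltac:(lra)) as [D|(q & q' & G & D)];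
    [left|right; exists q, q'; split]; auto; lra.
Qed.

(* [pglue p r] is below every small [c] yet is an infimum of finitely many one-jump
   costs, so one of these costs vanishes. *)
Lemma pglue_eq0 p r : pglue Y p r = 0 -> p = r \/ glue_edge p r.
Proof.
  intro H0.
  set (pts := T :: L :: Rp :: nil).
  set (jump st := dp p (letter (fst st), pt Y (snd st)) + dp (letter (snd st), pt Y (fst st)) r).
  assert (Hpts : forall t, In t pts) by (intros []; simpl; auto).
  destruct (list_small_le0 (dp p r :: map jump (list_prod pts pts)) (/ 2)) as (v & Hv & Hv0).
  - lra.
  - intros c [Hc Hc2]. destruct (pglue_short p r c) as [D|(q & q' & (s & t & _ & -> & ->) & D)];
      [lra|lra|exists (dp p r); simpl; auto|].
    exists (jump (s, t)). split; [|exact D].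
    right. apply in_map, in_prod; apply Hpts.
  - destruct Hv as [<-|((s, t) & <- & _)%in_map_iff].
    { left. apply dprod_eq0. pose proof (dprod_ge0 p r). lra. }
    unfold jump in Hv0; simpl in Hv0.
    pose proof (dprod_ge0 p (letter s, pt Y t)). pose proof (dprod_ge0 (letter t, pt Y s) r).
    assert (Ep : p = (letter s, pt Y t)) by (apply dprod_eq0; lra).
    assert (Er : (letter t, pt Y s) = r) by (apply dprod_eq0; lra).
    subst p r.
    destruct (classic (s = t)) as [<-|Hst]; [left; reflexivity|right; exists s, t; auto].
Qed.

Lemma pglue_eq0_glue p r : pglue Y p r = 0 -> glue Y p r.
Proof.
  intro H. destruct (pglue_eq0 p r H) as [<-|G]; [apply rst_refl|apply glue_edge_glue, G].
Qed.

Lemma pglue_ge_lipschitz (phi : M3 * Y -> R) :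
  (forall p q, Rabs (phi p - phi q) <= dp p q) ->
  (forall p q, glue_edge p q -> phi p = phi q) ->
  forall p r, Rabs (phi p - phi r) <= pglue Y p r.
Proof.
  intros Hl Hg p r. apply pglue_ge.
  induction 1 as [p r|p q p' r c Hq _ IH]; [apply Hl|].
  assert (E : phi q = phi p') by (destruct (glue_char _ _ Hq) as [->|G]; auto).
  pose proof (Hl p q). pose proof (Rabs_triang (phi p - phi q) (phi p' - phi r)).
  replace (phi p - phi q + (phi p' - phi r)) with (phi p - phi r) in * by (rewrite E; ring).
  lra.
Qed.

(* A glue-invariant 1-Lipschitz function separating the point [r] of [M (x) Y] from the
   other two. *)
Definition potential (r : P3) (q : M3 * Y) : R :=
  (if M3_eqb (fst q) (letter r) then 0 else / 2) + / 2 * mdist (snd q) (pt Y r).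

Lemma potential_lipschitz r p q : Rabs (potential r p - potential r q) <= dp p q.
Proof.
  destruct p as [a y], q as [b y']. unfold potential, dprod; simpl.
  pose proof (mdist_ge0 Y HY y (pt Y r)). pose proof (mdist_ge0 Y HY y' (pt Y r)).
  pose proof (mdist_le1 Y HY y (pt Y r)). pose proof (mdist_le1 Y HY y' (pt Y r)).
  destruct (M3_eqb a b) eqn:E.
  - apply M3_eqbP in E. subst b.
    pose proof (mdist_lipschitz Y HY y y' (pt Y r)) as Hlip.
    apply Rabs_le_between' in Hlip. apply Rabs_le_between'.
    destruct (M3_eqb a (letter r)); lra.
  - apply Rabs_le. destruct (M3_eqb a (letter r)), (M3_eqb b (letter r)); lra.
Qed.

Lemma potential_glue_edge r p q : glue_edge p q -> potential r p = potential r q.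
Proof.
  intros (s & t & Hst & -> & ->). unfold potential; cbn [fst snd].
  rewrite !(mdist_pt Y HY). destruct s, t, r; simpl; congruence || lra.
Qed.

Lemma pglue_pt s t : s <> t -> pglue Y (letter s, pt Y s) (letter t, pt Y t) = 1.
Proof.
  intro Hst. apply Rle_antisym; [eapply Rle_trans; [apply pglue_le_dprod|apply dprod_le1]|].
  pose proof (pglue_ge_lipschitz (potential s) (potential_lipschitz s) (potential_glue_edge s)
    (letter s, pt Y s) (letter t, pt Y t)) as H.
  pose proof (Rabs_maj2 (potential s (letter s, pt Y s) - potential s (letter t, pt Y t))).
  unfold potential in *; cbn [fst snd] in *. rewrite !(mdist_pt Y HY) in *.
  destruct s, t; simpl in *; congruence || lra.
Qed.

Lemma F_met3 : is_met3 (F Y).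
Proof.
  pose proof (qdist_pseudometric _ pglue_pseudometric) as (Q0 & Qs & Qt).
  split; [|split; [|split; [|split; [|split; [|split]]]]]; simpl.
  - intros u v. rewrite (qdist_rep _ pglue_pseudometric). split; [apply pglue_ge0|].
    eapply Rle_trans; [apply pglue_le_dprod|apply dprod_le1].
  - split; [apply (qdist_eq0 _ pglue_pseudometric)|intros ->; apply Q0].
  - apply Qs.
  - apply Qt.
  - rewrite (qdist_cls _ pglue_pseudometric). exact (pglue_pt T L ltac:(discriminate)).
  - rewrite (qdist_cls _ pglue_pseudometric). exact (pglue_pt L Rp ltac:(discriminate)).
  - rewrite (qdist_cls _ pglue_pseudometric). exact (pglue_pt T Rp ltac:(discriminate)).
Qed.

Lemma mdist_F_cls p q : @mdist (F Y) (cls (pglue Y) p) (cls (pglue Y) q) = pglue Y p q.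
Proof. apply (qdist_cls _ pglue_pseudometric). Qed.

Lemma mdist_F_rep (u v : F Y) : mdist u v = pglue Y (rep u) (rep v).
Proof. apply (qdist_rep _ pglue_pseudometric). Qed.

Lemma mdist_tensor a (y y' : Y) : mdist (tensor a y) (tensor a y') <= / 2 * mdist y y'.
Proof. unfold tensor. rewrite mdist_F_cls, <- (dprod_same a). apply pglue_le_dprod. Qed.

End TensorMetric.

Lemma tensor_rep {Y : Met3} (u : F Y) : tensor (fst (rep u)) (snd (rep u)) = u.
Proof. unfold tensor. rewrite <- surjective_pairing. apply cls_rep. Qed.

Lemma Fiter_met3 n (Y : Met3) : is_met3 Y -> is_met3 (Fiter n Y).
Proof. revert Y; induction n; intros Y HY; simpl; auto using F_met3. Qed.

(** * [M (x) -] on maps *)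

Definition isometry {Y Z : Met3} (g : Y -> Z) : Prop :=
  forall y y', mdist (g y) (g y') = mdist y y'.

Lemma preserves_iff_pt {Y Z : Met3} (g : Y -> Z) : preserves g <-> forall t, g (pt Y t) = pt Z t.
Proof.
  split; [apply preserves_pt|]. intro H. split; [|split]; [apply (H T)|apply (H L)|apply (H Rp)].
Qed.

Lemma continuous_at_pts {Y Z : Met3} (g : Y -> Z) : continuous g ->
  forall eps, 0 < eps -> exists delta, 0 < delta /\
    forall t y, mdist (pt Y t) y < delta -> mdist (g (pt Y t)) (g y) < eps.
Proof.
  intros Hg eps Heps.
  destruct (Hg tT eps Heps) as (dT & HdT & HT).
  destruct (Hg tL eps Heps) as (dL & HdL & HL).
  destruct (Hg tR eps Heps) as (dR & HdR & HR).
  exists (Rmin dT (Rmin dL dR)). split; [repeat apply Rmin_glb_lt; assumption|].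
  pose proof (Rmin_l dT (Rmin dL dR)). pose proof (Rmin_r dT (Rmin dL dR)).
  pose proof (Rmin_l dL dR). pose proof (Rmin_r dL dR).
  intros [] y Hy; [apply HT|apply HL|apply HR]; simpl in *; lra.
Qed.

Section FunctorOnMaps.
Variables Y Z : Met3.
Hypothesis HY : is_met3 Y.
Hypothesis HZ : is_met3 Z.
Variable g : Y -> Z.
Hypothesis Hg : preserves g.

Definition pmap (p : M3 * Y) : M3 * Z := (fst p, g (snd p)).

Lemma pmap_glue_point s t : pmap (letter s, pt Y t) = (letter s, pt Z t).
Proof. unfold pmap; simpl. rewrite (preserves_pt g Hg). reflexivity. Qed.

Lemma glue_edge_pmap p q : glue_edge Y p q -> glue_edge Z (pmap p) (pmap q).
Proof.
  intros (s & t & Hst & -> & ->). exists s, t. rewrite !pmap_glue_point. auto.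
Qed.

Lemma glue_edge_pmap_inv q q' : glue_edge Z q q' ->
  exists p p', q = pmap p /\ q' = pmap p' /\ glue_edge Y p p'.
Proof.
  intros (s & t & Hst & -> & ->). exists (letter s, pt Y t), (letter t, pt Y s).
  rewrite !pmap_glue_point. repeat split; auto. exists s, t; auto.
Qed.

Lemma glue_pmap p q : glue Y p q -> glue Z (pmap p) (pmap q).
Proof.
  intro H. destruct (glue_char Y HY p q H) as [<-|E]; [apply rst_refl|].
  apply glue_edge_glue, glue_edge_pmap, E.
Qed.

Lemma Fmap_cls p : Fmap g (cls (pglue Y) p) = cls (pglue Z) (pmap p).
Proof.
  apply (eq_cls _ (pglue_pseudometric Z HZ)), (glue_pglue Z HZ), glue_pmap.
  apply (pglue_eq0_glue Y HY), (rep_cls _ (pglue_pseudometric Y HY)).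
Qed.

Lemma Fmap_tensor a y : Fmap g (tensor a y) = tensor a (g y).
Proof. apply Fmap_cls. Qed.

Lemma Fmap_preserves : preserves (Fmap g).
Proof.
  apply preserves_iff_pt. intro t.
  rewrite !pt_F, Fmap_tensor, (preserves_pt g Hg). reflexivity.
Qed.

Lemma mdist_Fmap u v : mdist (Fmap g u) (Fmap g v) = pglue Z (pmap (rep u)) (pmap (rep v)).
Proof. apply (mdist_F_cls Z HZ). Qed.

Lemma dprod_pmap_same p q : fst p = fst q ->
  dprod Z (pmap p) (pmap q) = / 2 * mdist (g (snd p)) (g (snd q)).
Proof. unfold pmap; simpl; intros ->. apply dprod_same. Qed.

Section Isometry.
Hypothesis Hiso : isometry g.

Lemma dprod_pmap p q : dprod Z (pmap p) (pmap q) = dprod Y p q.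
Proof. unfold dprod, pmap; simpl. rewrite Hiso. reflexivity. Qed.

Lemma pglue_pmap_le p r : pglue Z (pmap p) (pmap r) <= pglue Y p r.
Proof.
  apply (pglue_ge Y HY). induction 1 as [p r|p q p' r c Hq _ IH].
  - rewrite <- dprod_pmap. apply (pglue_le_dprod Z HZ).
  - pose proof (pglue_triangle Z HZ (pmap p) (pmap q) (pmap r)).
    pose proof (pglue_triangle Z HZ (pmap q) (pmap p') (pmap r)).
    pose proof (pglue_le_dprod Z HZ (pmap p) (pmap q)).
    rewrite (glue_pglue Z HZ _ _ (glue_pmap _ _ Hq)), dprod_pmap in *. lra.
Qed.

(* Glue points of [M x Z] are images of glue points of [M x Y], so a chain of [M x Z]
   ending in the image of [g] can be pulled back jump by jump. *)
Lemma chain_pmap_ge p r c : chain Z p r c -> forall y0 rY, r = pmap rY ->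
  pglue Y y0 rY <= dprod Z (pmap y0) p + c.
Proof.
  induction 1 as [p r|p q p' r c Hq _ IH]; intros y0 rY ->.
  - pose proof (pglue_le_dprod Y HY y0 rY). rewrite <- dprod_pmap in *.
    pose proof (dprod_triangle Z HZ (pmap y0) p (pmap rY)). lra.
  - pose proof (dprod_triangle Z HZ (pmap y0) p q).
    destruct (glue_char Z HZ _ _ Hq) as [<-|E]; [specialize (IH y0 rY eq_refl); lra|].
    destruct (glue_edge_pmap_inv _ _ E) as (qY & pY & -> & -> & EY).
    specialize (IH pY rY eq_refl). rewrite (dprod_xx Z HZ) in IH.
    pose proof (pglue_triangle Y HY y0 qY rY). pose proof (pglue_triangle Y HY qY pY rY).
    pose proof (pglue_le_dprod Y HY y0 qY). rewrite <- dprod_pmap in *.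
    rewrite (glue_pglue Y HY _ _ (glue_edge_glue Y qY pY EY)) in *. lra.
Qed.

Lemma Fmap_isometry : isometry (Fmap g).
Proof.
  intros u v. rewrite mdist_Fmap, (mdist_F_rep Y HY).
  apply Rle_antisym; [apply pglue_pmap_le|].
  apply (pglue_ge Z HZ). intros c Hc.
  pose proof (chain_pmap_ge _ _ _ Hc (rep u) (rep v) eq_refl). rewrite (dprod_xx Z HZ) in *. lra.
Qed.

End Isometry.

Lemma pglue_pmap_lt p eps delta :
  (forall y, mdist (snd p) y < delta -> mdist (g (snd p)) (g y) < eps) ->
  (forall t y, mdist (pt Y t) y < delta -> mdist (g (pt Y t)) (g y) < eps) ->
  forall r, pglue Y p r < Rmin (/ 4) (delta / 4) -> pglue Z (pmap p) (pmap r) < eps.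
Proof.
  intros Hp Hpt r Hr. pose proof (Rmin_l (/ 4) (delta / 4)). pose proof (Rmin_r (/ 4) (delta / 4)).
  pose proof (pglue_ge0 Y HY p r).
  destruct (pglue_short Y HY p r _ Hr ltac:(lra)) as [D|(q & q' & E & D)].
  - destruct (dprod_lt1 Y _ _ _ D ltac:(lra)) as [Ef D'].
    eapply Rle_lt_trans; [apply (pglue_le_dprod Z HZ)|]. rewrite dprod_pmap_same by exact Ef.
    specialize (Hp (snd r) ltac:(lra)). pose proof (mdist_ge0 Z HZ (g (snd p)) (g (snd r))). lra.
  - pose proof (dprod_ge0 Y HY p q). pose proof (dprod_ge0 Y HY q' r).
    destruct (dprod_lt1 Y p q _ (Rle_refl _)) as [E1 D1]; [lra|].
    destruct (dprod_lt1 Y q' r _ (Rle_refl _)) as [E2 D2]; [lra|].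
    eapply Rle_lt_trans; [apply (pglue_via Z HZ (pmap p) (pmap q) (pmap q'))|].
    { apply glue_pmap, glue_edge_glue, E. }
    rewrite !dprod_pmap_same by assumption.
    specialize (Hp (snd q) ltac:(lra)).
    destruct E as (s & t & _ & -> & ->). simpl in *.
    specialize (Hpt s (snd r) ltac:(lra)). lra.
Qed.

Lemma Fmap_continuous : continuous g -> continuous (Fmap g).
Proof.
  intros Hc u eps Heps.
  destruct (Hc (snd (rep u)) eps Heps) as (d0 & Hd0 & H0).
  destruct (continuous_at_pts g Hc eps Heps) as (d1 & Hd1 & H1).
  exists (Rmin (/ 4) (Rmin d0 d1 / 4)). split.
  { apply Rmin_glb_lt; [lra|]. pose proof (Rmin_glb_lt d0 d1 0 Hd0 Hd1). lra. }
  intros v Hv. rewrite mdist_Fmap. rewrite (mdist_F_rep Y HY) in Hv.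
  pose proof (Rmin_l d0 d1). pose proof (Rmin_r d0 d1).
  apply (pglue_pmap_lt _ _ (Rmin d0 d1)); auto.
  - intros y Hy. apply H0. lra.
  - intros t y Hy. apply H1. lra.
Qed.

End FunctorOnMaps.

Lemma Fmap_iter_closed (P : forall Y Z : Met3, (Y -> Z) -> Prop) :
  (forall Y Z : Met3, is_met3 Y -> is_met3 Z -> forall g : Y -> Z, preserves g ->
     P Y Z g -> P (F Y) (F Z) (Fmap g)) ->
  forall n (Y Z : Met3), is_met3 Y -> is_met3 Z -> forall g : Y -> Z, preserves g ->
    P Y Z g -> P (Fiter n Y) (Fiter n Z) (Fmap_iter n g).
Proof.
  intros HP n. induction n; intros Y Z HY HZ g Hg H; simpl; auto.
  apply IHn; auto using F_met3, Fmap_preserves.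
Qed.

Lemma Fmap_iter_isometry n (Y Z : Met3) : is_met3 Y -> is_met3 Z ->
  forall g : Y -> Z, preserves g -> isometry g -> isometry (Fmap_iter n g).
Proof. apply (Fmap_iter_closed (fun _ _ g => isometry g)), Fmap_isometry. Qed.

Lemma Fmap_iter_continuous n (Y Z : Met3) : is_met3 Y -> is_met3 Z ->
  forall g : Y -> Z, preserves g -> continuous g -> continuous (Fmap_iter n g).
Proof. apply (Fmap_iter_closed (fun _ _ g => continuous g)), Fmap_continuous. Qed.

Lemma Fmap_iter_tens n (Y Z : Met3) (g : Y -> Z) : is_met3 Y -> is_met3 Z -> preserves g ->
  forall m y, Fmap_iter n g (tens m n y) = tens m n (g y).
Proof.
  revert Y Z g; induction n; intros Y Z g HY HZ Hg m y; simpl; auto.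
  rewrite IHn, Fmap_tensor; auto using F_met3, Fmap_preserves.
Qed.

Lemma tens_ext n (Y : Met3) (m m' : nat -> M3) (y : Y) :
  (forall i, (i < n)%nat -> m i = m' i) -> tens m n y = tens m' n y.
Proof.
  revert Y y; induction n; intros Y y H; simpl; auto.
  rewrite (H n) by lia. apply IHn. intros; apply H; lia.
Qed.

Lemma tens_lipschitz n (Y : Met3) : is_met3 Y -> forall m (y y' : Y),
  mdist (tens m n y) (tens m n y') <= (/ 2) ^ n * mdist y y'.
Proof.
  revert Y; induction n; intros Y HY m y y'; simpl; [lra|].
  eapply Rle_trans; [apply IHn, F_met3, HY|].
  pose proof (mdist_tensor Y HY (m n) y y'). pose proof (pow_le (/ 2) n ltac:(lra)).
  replace (/ 2 * (/ 2) ^ n * mdist y y') with ((/ 2) ^ n * (/ 2 * mdist y y')) by ring.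
  apply Rmult_le_compat_l; lra.
Qed.

Lemma tens_agree n (Y : Met3) : is_met3 Y -> forall k m m' (y y' : Y),
  (forall i, (i < k)%nat -> m i = m' i) -> (k <= n)%nat ->
  mdist (tens m n y) (tens m' n y') <= (/ 2) ^ k.
Proof.
  revert Y; induction n; intros Y HY k m m' y y' Hm Hk.
  - replace k with 0%nat by lia. apply (mdist_le1 Y HY).
  - destruct (Compare_dec.le_lt_eq_dec _ _ Hk) as [Hlt| ->]; [apply IHn; auto using F_met3; lia|].
    simpl. rewrite (tens_ext n (F Y) m' m) by (intros i Hi; symmetry; apply Hm; lia).
    rewrite (Hm n) by lia.
    eapply Rle_trans; [apply tens_lipschitz, F_met3, HY|].
    pose proof (mdist_tensor Y HY (m' n) y y'). pose proof (mdist_le1 Y HY y y').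
    pose proof (pow_le (/ 2) n ltac:(lra)).
    rewrite Rmult_comm. apply Rmult_le_compat_r; lra.
Qed.

Lemma tens_surj n (Y : Met3) (u : Fiter n Y) : exists m y, u = tens m n y.
Proof.
  revert Y u; induction n; intros Y u; [exists (fun _ => ma), u; reflexivity|].
  destruct (IHn (F Y) u) as (m & w & ->).
  exists (fun i => if Nat.eqb i n then fst (rep w) else m i), (snd (rep w)).
  simpl. rewrite Nat.eqb_refl, tensor_rep. apply tens_ext.
  intros i Hi. destruct (Nat.eqb_spec i n); [lia|reflexivity].
Qed.

(** * The spaces [G] and [S] *)

Lemma bang_tensor (t : I) : bang t = tensor (letter t) t.
Proof. destruct t; reflexivity. Qed.

Lemma bang_preserves : preserves bang.
Proof. split; [|split]; reflexivity. Qed.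

Lemma bang_isometry : isometry bang.
Proof.
  assert (Hpt : forall t : I, bang t = pt (F I) t) by (intros []; reflexivity).
  intros s t. rewrite !Hpt, (mdist_pt (F I) (F_met3 I I_met3)). destruct s, t; reflexivity.
Qed.

Definition pad (m : nat -> M3) (n : nat) (t : P3) : nat -> M3 :=
  fun i => if Nat.ltb i n then m i else letter t.

Lemma pad_lt m n t i : (i < n)%nat -> pad m n t i = m i.
Proof. intro H. unfold pad. destruct (Nat.ltb_spec i n); [reflexivity|lia]. Qed.

Lemma pad_ge m n t i : (n <= i)%nat -> pad m n t i = letter t.
Proof. intro H. unfold pad. destruct (Nat.ltb_spec i n); [lia|reflexivity]. Qed.

Lemma lift_tens j n m (t : I) : lift j n (tens m n t) = tens (pad m n t) (j + n) t.
Proof.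
  induction j; simpl.
  - apply tens_ext. intros; symmetry; apply pad_lt; assumption.
  - rewrite IHj, (Fmap_iter_tens _ I (F I)), bang_tensor, pad_ge by
      (auto using I_met3, F_met3, bang_preserves; lia).
    reflexivity.
Qed.

Lemma tens_cast N N' (E : N = N') m (t : I) :
  eq_rect N (fun N => car (Fiter N I)) (tens m N t) N' E = tens m N' t.
Proof. destruct E; reflexivity. Qed.

Lemma pG_tens_sum n k m m' (t t' : I) :
  pG (Gel n (tens m n t)) (Gel k (tens m' k t')) =
  mdist (tens (pad m n t) (k + n) t) (tens (pad m' k t') (k + n) t').
Proof. unfold pG, Gel. rewrite !lift_tens, tens_cast. reflexivity. Qed.

Lemma mdist_tens_pad_succ N n k m m' (t t' : I) : (n <= N)%nat -> (k <= N)%nat ->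
  mdist (tens (pad m n t) (Datatypes.S N) t) (tens (pad m' k t') (Datatypes.S N) t') =
  mdist (tens (pad m n t) N t) (tens (pad m' k t') N t').
Proof.
  intros Hn Hk. simpl. rewrite !pad_ge, <- !bang_tensor by assumption.
  rewrite <- !(Fmap_iter_tens N I (F I)) by auto using I_met3, F_met3, bang_preserves.
  apply Fmap_iter_isometry; auto using I_met3, F_met3, bang_preserves, bang_isometry.
Qed.

Lemma mdist_tens_pad_plus d N n k m m' (t t' : I) : (n <= N)%nat -> (k <= N)%nat ->
  mdist (tens (pad m n t) (d + N) t) (tens (pad m' k t') (d + N) t') =
  mdist (tens (pad m n t) N t) (tens (pad m' k t') N t').
Proof.
  intros Hn Hk. induction d as [|d IH]; [reflexivity|].
  rewrite <- IH. apply mdist_tens_pad_succ; lia.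
Qed.

Lemma pG_tens n k m m' (t t' : I) N : (n <= N)%nat -> (k <= N)%nat ->
  pG (Gel n (tens m n t)) (Gel k (tens m' k t')) =
  mdist (tens (pad m n t) N t) (tens (pad m' k t') N t').
Proof.
  intros Hn Hk. rewrite pG_tens_sum.
  rewrite <- (mdist_tens_pad_plus N (k + n)), <- (mdist_tens_pad_plus (k + n) N) by lia.
  rewrite Nat.add_comm. reflexivity.
Qed.

Lemma pG_pseudometric : is_pseudometric pG.
Proof.
  assert (Hd : forall a : Gpre, exists n m (t : I), a = Gel n (tens m n t)).
  { intros [n u]. destruct (tens_surj n I u) as (m & t & ->). exists n, m, t. reflexivity. }
  pose proof (fun N => Fiter_met3 N I I_met3) as HN.
  split; [|split].
  - intro a. destruct (Hd a) as (n & m & t & ->).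
    rewrite (pG_tens n n m m t t n) by lia. apply mdist_xx, HN.
  - intros a b. destruct (Hd a) as (n & m & t & ->). destruct (Hd b) as (k & m' & t' & ->).
    rewrite (pG_tens n k m m' t t' (n + k)), (pG_tens k n m' m t' t (n + k)) by lia.
    apply mdist_sym, HN.
  - intros a b c. destruct (Hd a) as (n & m & t & ->). destruct (Hd b) as (k & m' & t' & ->).
    destruct (Hd c) as (l & m'' & t'' & ->).
    rewrite (pG_tens n l m m'' t t'' (n + k + l)), (pG_tens n k m m' t t' (n + k + l)),
      (pG_tens k l m' m'' t' t'' (n + k + l)) by lia.
    apply mdist_triangle, HN.
Qed.

Lemma mdist_G_cls a b : @mdist G (cls pG a) (cls pG b) = pG a b.
Proof. apply (qdist_cls _ pG_pseudometric). Qed.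

Lemma mdist_G_sym (a b : G) : mdist a b = mdist b a.
Proof. apply (qdist_pseudometric _ pG_pseudometric). Qed.

Lemma mdist_G_triangle (a b c : G) : mdist a c <= mdist a b + mdist b c.
Proof. apply (qdist_pseudometric _ pG_pseudometric). Qed.

Lemma dCS_limit (s t : CauchyG) :
  is_lim_seq (fun n => mdist (proj1_sig s n) (proj1_sig t n)) (dCS s t).
Proof.
  destruct s as [s Hs], t as [t Ht]. unfold dCS. cbn [proj1_sig].
  assert (Hf : ex_finite_lim_seq (fun n => mdist (s n) (t n))).
  { apply ex_lim_seq_cauchy_corr. intro eps. pose proof (cond_pos eps).
    destruct (Hs (eps / 2)) as [N1 H1]; [lra|]. destruct (Ht (eps / 2)) as [N2 H2]; [lra|].
    exists (Nat.max N1 N2). intros n k Hn Hk.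
    specialize (H1 n k ltac:(lia) ltac:(lia)). specialize (H2 n k ltac:(lia) ltac:(lia)).
    pose proof (mdist_G_triangle (s n) (s k) (t n)). pose proof (mdist_G_triangle (s k) (t k) (t n)).
    pose proof (mdist_G_triangle (s k) (s n) (t k)). pose proof (mdist_G_triangle (s n) (t n) (t k)).
    rewrite (mdist_G_sym (s k) (s n)), (mdist_G_sym (t k) (t n)) in *.
    apply Rabs_def1; lra. }
  destruct Hf as [l Hl]. rewrite (is_lim_seq_unique _ _ Hl). exact Hl.
Qed.

Lemma dCS_pseudometric : is_pseudometric dCS.
Proof.
  pose proof (qdist_pseudometric _ pG_pseudometric) as (G0 & Gs & Gt).
  split; [|split].
  - intros [s Hs]. unfold dCS; simpl.
    rewrite (Lim_seq_ext _ (fun _ => 0)), Lim_seq_const; auto.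
  - intros [s Hs] [t Ht]. unfold dCS; simpl. f_equal. apply Lim_seq_ext. intro; apply Gs.
  - intros a b c.
    refine (is_lim_seq_le _ _ _ (Finite (dCS a b + dCS b c)) (fun n => Gt _ (proj1_sig b n) _)
      (dCS_limit a c) _).
    apply (is_lim_seq_plus' _ _ _ _ (dCS_limit a b) (dCS_limit b c)).
Qed.

Lemma mdist_jS (a b : G) : @mdist S (jS a) (jS b) = mdist a b.
Proof.
  unfold jS. simpl. rewrite (qdist_cls _ dCS_pseudometric). unfold dCS; simpl.
  rewrite Lim_seq_const. reflexivity.
Qed.

Lemma mdist_S_triangle (a b c : S) : mdist a c <= mdist a b + mdist b c.
Proof. apply (qdist_pseudometric _ dCS_pseudometric). Qed.

Lemma mdist_S_sym (a b : S) : mdist a b = mdist b a.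
Proof. apply (qdist_pseudometric _ dCS_pseudometric). Qed.

Lemma mdist_S_eq0 (a b : S) : mdist a b <= 0 -> a = b.
Proof.
  intro H. apply (qdist_eq0 _ dCS_pseudometric).
  pose proof (pseudometric_ge0 _ (qdist_pseudometric _ dCS_pseudometric) a b). simpl in *. lra.
Qed.

Lemma mdist_theta m m' z n :
  @mdist G (theta m z n) (theta m' z n) = mdist (tens m n (z : I)) (tens m' n (z : I)).
Proof.
  unfold theta. rewrite mdist_G_cls, (pG_tens n n m m' z z n) by lia.
  rewrite (tens_ext n I (pad m n z) m), (tens_ext n I (pad m' n z) m'); auto using pad_lt.
Qed.

Lemma mdist_theta_tail m z n k : (n <= k)%nat ->
  @mdist G (theta m z n) (theta m z k) <= (/ 2) ^ n.
Proof.
  intro H. unfold theta. rewrite mdist_G_cls, (pG_tens n k m m z z k) by lia.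
  apply (tens_agree k I I_met3 n); [|assumption].
  intros i Hi. rewrite !pad_lt by lia. reflexivity.
Qed.

Lemma mdist_theta_const z n (t : P3) :
  @mdist G (cls pG (Gel 0 t)) (theta (fun _ => letter t) z n) <= (/ 2) ^ n.
Proof.
  unfold theta. rewrite mdist_G_cls.
  change (Gel 0 t) with (Gel 0 (tens (fun _ => letter t) 0 (t : I))).
  rewrite (pG_tens 0 n _ _ t z n) by lia.
  apply (tens_agree n I I_met3 n); [|lia].
  intros i Hi. rewrite pad_ge, pad_lt by lia. reflexivity.
Qed.

(** * The map [f] *)

Lemma pow_half_lt eps : 0 < eps -> exists n, (/ 2) ^ n < eps.
Proof.
  intro H. destruct (pow_lt_1_zero (/ 2) ltac:(rewrite Rabs_pos_eq; lra) eps H) as [N HN].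
  exists N. specialize (HN N (le_n _)). rewrite Rabs_pos_eq in HN; [|apply pow_le]; lra.
Qed.

Lemma le0_of_pow_half x c : (forall n, x <= c * (/ 2) ^ n) -> x <= 0.
Proof.
  intro H. apply Rle_plus_epsilon. intros eps Heps. rewrite Rplus_0_l.
  destruct (Rle_lt_dec c 0) as [Hc|Hc].
  - specialize (H 0%nat). simpl in H. lra.
  - destruct (pow_half_lt (eps / c)) as [n Hn]; [apply Rdiv_lt_0_compat; lra|].
    specialize (H n). apply Rmult_lt_compat_l with (r := c) in Hn; [|lra].
    replace (c * (eps / c)) with eps in Hn by (field; lra). lra.
Qed.

Lemma continuous_comp {X Y Z : Met3} (g : X -> Y) (h : Y -> Z) :
  continuous g -> continuous h -> continuous (fun x => h (g x)).
Proof.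
  intros Hg Hh x eps Heps.
  destruct (Hh (g x) eps Heps) as (d1 & Hd1 & H1).
  destruct (Hg x d1 Hd1) as (d2 & Hd2 & H2).
  exists d2. auto.
Qed.

(* The three points of [I] sit isometrically in [X], which lets us compare [M^n (x) I] with
   [M^n (x) X]; the endpoints are lost at cost [2^-n] each. *)
Lemma mdist_tens_I_le (X : Met3) : is_met3 X -> forall n m m' (z : I) (u v : X),
  mdist (tens m n z) (tens m' n z) <= 2 * (/ 2) ^ n + mdist (tens m n u) (tens m' n v).
Proof.
  intros HX n m m' z u v.
  pose (iota := pt X : I -> X).
  assert (Hpres : preserves iota) by (split; [|split]; reflexivity).
  assert (Hiso : isometry iota).
  { intros s t. unfold iota. rewrite (mdist_pt X HX). destruct s, t; reflexivity. }
  rewrite <- (Fmap_iter_isometry n I X I_met3 HX iota Hpres Hiso).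
  rewrite !(Fmap_iter_tens n I X iota I_met3 HX Hpres).
  pose proof (Fiter_met3 n X HX) as HXn.
  pose proof (mdist_triangle _ HXn (tens m n (iota z)) (tens m n u) (tens m' n (iota z))).
  pose proof (mdist_triangle _ HXn (tens m n u) (tens m' n v) (tens m' n (iota z))).
  pose proof (tens_lipschitz n X HX m (iota z) u).
  pose proof (tens_lipschitz n X HX m' v (iota z)).
  pose proof (mdist_le1 X HX (iota z) u). pose proof (mdist_le1 X HX v (iota z)).
  pose proof (pow_le (/ 2) n ltac:(lra)).
  assert ((/ 2) ^ n * mdist (iota z) u <= (/ 2) ^ n * 1) by (apply Rmult_le_compat_l; auto).
  assert ((/ 2) ^ n * mdist v (iota z) <= (/ 2) ^ n * 1) by (apply Rmult_le_compat_l; auto).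
  lra.
Qed.

Section Coalgebra.
Variable X : Met3.
Hypothesis HX : is_met3 X.
Variable e : X -> F X.
Hypothesis He : continuous e.
Hypothesis Hpe : preserves e.

Fixpoint unfold_tail (x : X) (n : nat) : X :=
  match n with O => x | Datatypes.S k => snd (rep (e (unfold_tail x k))) end.

Definition unfold_head (x : X) (n : nat) : M3 := fst (rep (e (unfold_tail x n))).

Lemma chi_tens x (m : nat -> M3) (xs : nat -> X) :
  xs O = x -> (forall n, e (xs n) = tensor (m n) (xs (Datatypes.S n))) ->
  forall n, chi e x n = tens m n (xs n).
Proof.
  intros H0 Hs. induction n as [|n IH]; [auto|].
  simpl. rewrite IH, (Fmap_iter_tens n X (F X) e HX (F_met3 X HX) Hpe), Hs. reflexivity.
Qed.

Lemma chi_decomposition x : exists m xs, forall n, chi e x n = tens m n (xs n).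
Proof.
  exists (unfold_head x), (unfold_tail x). apply chi_tens; [reflexivity|].
  intro n. symmetry. apply tensor_rep.
Qed.

Lemma chi_continuous n : continuous (fun x => chi e x n).
Proof.
  induction n as [|n IH]; [intros x eps Heps; exists eps; auto|].
  apply (continuous_comp (fun x => chi e x n) (Fmap_iter n e) IH).
  apply Fmap_iter_continuous; auto using F_met3.
Qed.

Variable z : P3.
Variable f : X -> S.
Hypothesis Hf : forall (x : X) (m : nat -> M3) (xs : nat -> X),
  (forall n, chi e x n = tens m n (xs n)) ->
  forall eps, 0 < eps -> exists N, forall n, (N <= n)%nat ->
    @mdist S (jS (theta m z n)) (f x) < eps.

Lemma mdist_theta_f x m xs : (forall n, chi e x n = tens m n (xs n)) ->
  forall n, @mdist S (jS (theta m z n)) (f x) <= (/ 2) ^ n.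
Proof.
  intros Hx n. apply Rle_plus_epsilon. intros eps Heps.
  destruct (Hf x m xs Hx eps Heps) as [N HN].
  pose proof (mdist_S_triangle (jS (theta m z n)) (jS (theta m z (Nat.max n N))) (f x)).
  rewrite mdist_jS in *. pose proof (mdist_theta_tail m z n (Nat.max n N) ltac:(lia)).
  specialize (HN (Nat.max n N) ltac:(lia)). lra.
Qed.

Lemma f_continuous : continuous f.
Proof.
  intros x eps Heps.
  destruct (chi_decomposition x) as (m & xs & Hx).
  destruct (pow_half_lt (eps / 8)) as [n Hn]; [lra|].
  destruct (chi_continuous n x (eps / 2)) as (d & Hd & Hchi); [lra|].
  exists d. split; [exact Hd|]. intros y Hy.
  destruct (chi_decomposition y) as (m' & ys & Hy').
  specialize (Hchi y Hy). simpl in Hchi. rewrite Hx, Hy' in Hchi.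
  pose proof (mdist_tens_I_le X HX n m m' z (xs n) (ys n)). rewrite <- mdist_theta in *.
  pose proof (mdist_theta_f x m xs Hx n). pose proof (mdist_theta_f y m' ys Hy' n).
  pose proof (mdist_S_triangle (f x) (jS (theta m z n)) (f y)).
  pose proof (mdist_S_triangle (jS (theta m z n)) (jS (theta m' z n)) (f y)).
  rewrite mdist_jS, (mdist_S_sym (f x) (jS (theta m z n))) in *. lra.
Qed.

Lemma f_preserves : preserves f.
Proof.
  apply preserves_iff_pt. intro t.
  assert (Hchi : forall n, chi e (pt X t) n = tens (fun _ => letter t) n (pt X t)).
  { apply chi_tens; [reflexivity|]. intro n. rewrite (preserves_pt e Hpe). apply pt_F. }
  assert (HS : pt S t = jS (cls pG (Gel 0 t))) by (destruct t; reflexivity).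
  rewrite HS. symmetry. apply mdist_S_eq0, (le0_of_pow_half _ 2). intro n.
  pose proof (mdist_theta_f _ _ _ Hchi n).
  pose proof (mdist_S_triangle (jS (cls pG (Gel 0 t))) (jS (theta (fun _ => letter t) z n))
    (f (pt X t))).
  rewrite mdist_jS in *. pose proof (mdist_theta_const z n t). lra.
Qed.

End Coalgebra.

Theorem mainTheorem7 (X : Met3) (e : X -> F X) (z : P3) (f : X -> S) :
  is_met3 X -> continuous e -> preserves e ->
  (forall (x : X) (m : nat -> M3) (xs : nat -> X),
     (forall n, chi e x n = tens m n (xs n)) ->
     forall eps, 0 < eps -> exists N, forall n, (N <= n)%nat ->
       @mdist S (jS (theta m z n)) (f x) < eps) ->
  continuous f /\ preserves f.
Proof.
  intros HX He Hpe Hf. split.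
  - exact (f_continuous X HX e He Hpe z f Hf).
  - exact (f_preserves X HX e Hpe z f Hf).
Qed.
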